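(* Let $h:\mathbb R\to\mathbb R$ be strictly increasing and continuous on $[0,1]$ and $\beta\in(0,1)$ with $\nu_k\le h(\beta^k)$ for all $k\in\mathbb N$ and $\{k:\nu_k>h(0)\}\neq\emptyset$. Let $\omega(s)=\min\{h(1),\max\{s,h(0)\}\}$ and $$V(x)=\sup_{k\in\mathbb N}\beta^{-k}\,h^{-1}_{[0,1]}\big(\omega(\varphi(T^k(x)))\big),\quad x\in\mathbb R^d.$$ Then $V$ is an Opt-Lyapunov function for $(X^{\rm in},T)$ (with $V\circ T\le\beta V$). Moreover the function $\hat h$ defined by $\hat h(s)=s-h(0)$ for $s\le h(0)$ and $\hat h(s)=h^{-1}_{[0,1]}(s)$ for $s\in(h(0),h(1)]$ (extended arbitrarily to $\mathbb R$) is an $(X^{\rm in},T,\varphi)$-certificate of compatibility for $V$; in particular $V$ is $(X^{\rm in},T,\varphi)$-compatible.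
   Context: Standing data: nonempty $X^{\rm in}\subseteq\mathbb R^d$, $T:\mathbb R^d\to\mathbb R^d$, $\varphi:\mathbb R^d\to\mathbb R$ with $\varphi(0)=0$, $\nu_k=\sup_{x\in X^{\rm in}}\varphi(T^k(x))$ finite for all $k$; $G^{>}_\nu=\{k:\nu_k>\limsup_n\nu_n\}$. $h^{-1}_{[0,1]}:[h(0),h(1)]\to[0,1]$ is the inverse of $h|_{[0,1]}$. An Opt-Lyapunov function for $(X^{\rm in},T)$ is $V:\mathbb R^d\to[0,+\infty]$ with $\sup_{X^{\rm in}}V\in(0,1]$ and $V\circ T\le\lambda V$ for some $\lambda\in(0,1)$. $I^\varphi=\overline{\operatorname{conv}}\{\varphi(T^k(x)):k\in\mathbb N,x\in X^{\rm in}\}$. $\mathrm{SC}$: functions $\alpha:\mathbb R\to\mathbb R$ with an interval $I$ such that $\alpha(I)=[0,1]$ and $\alpha$ strictly increasing continuous on $\operatorname{conv}(I^\varphi\cup I)$. An $(X^{\rm in},T,\varphi)$-certificate of compatibility for $g$ is $\alpha\in\mathrm{SC}$ with $\alpha(\nu_k)>0$ for some $k\in G^{>}_\nu$ and $\alpha(\varphi(T^k(x)))\le g(T^k(x))$ for all $k\in\mathbb N$, $x\in X^{\rm in}$. $g$ is $(X^{\rm in},T,\varphi)$-compatible if for some $k\in G^{>}_\nu$ there are $\varepsilon,\eta>0$ with: $x\in X^{\rm in}$, $j\in\mathbb N$, $\varphi(T^j(x))>\nu_k-\eta$ imply $g(T^j(x))>\varepsilon$. *)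

From HB Require Import structures.
From mathcomp Require Import all_boot all_order all_algebra.
From mathcomp Require Import all_classical all_reals all_analysis.
Set Implicit Arguments. Unset Strict Implicit. Unset Printing Implicit Defensive.
Import Order.TTheory GRing.Theory Num.Theory.
Import numFieldNormedType.Exports.
Local Open Scope classical_set_scope.
Local Open Scope ring_scope.

Section Defs.
Variables (R : realType) (d : nat).
Local Notation X := 'rV[R]_d.

Definition nu_e (Xin : set X) (T : X -> X) (phi : X -> R) (k : nat) : \bar R :=
  ereal_sup [set (phi (iter k T x))%:E | x in Xin].

(* real value of nu_k (meaningful under the finiteness hypothesis) *)
Definition nu (Xin : set X) (T : X -> X) (phi : X -> R) (k : nat) : R :=
  fine (nu_e Xin T phi k).

Definition Ggt (Xin : set X) (T : X -> X) (phi : X -> R) : set nat :=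
  [set k | limn_esup (fun n => (nu Xin T phi n)%:E) < (nu Xin T phi k)%:E]%E.

Definition hinv01 (h : R -> R) (s : R) : R :=
  xget 0 [set t | 0 <= t <= 1 /\ h t = s].

Definition omega (h : R -> R) (s : R) : R := Order.min (h 1) (Order.max s (h 0)).

Definition convR (S : set R) : set R :=
  [set t | exists a b, S a /\ S b /\ a <= t <= b].

Definition Iphi (Xin : set X) (T : X -> X) (phi : X -> R) : set R :=
  closure (convR [set phi (iter k T x) | k in [set: nat] & x in Xin]).

Definition SC (Xin : set X) (T : X -> X) (phi : X -> R) (alpha : R -> R) : Prop :=
  exists I : set R, is_interval I /\ alpha @` I = `[0, 1]%classic /\
    let D := convR (Iphi Xin T phi `|` I) in
    {in D &, forall x y, x < y -> alpha x < alpha y} /\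
    {within D, continuous alpha}.

Definition certificate (Xin : set X) (T : X -> X) (phi : X -> R)
  (g : X -> \bar R) (alpha : R -> R) : Prop :=
  SC Xin T phi alpha /\
  (exists k, Ggt Xin T phi k /\ 0 < alpha (nu Xin T phi k)) /\
  (forall k x, Xin x -> ((alpha (phi (iter k T x)))%:E <= g (iter k T x))%E).

Definition compatible (Xin : set X) (T : X -> X) (phi : X -> R)
  (g : X -> \bar R) : Prop :=
  exists k, Ggt Xin T phi k /\ exists eps eta : R, 0 < eps /\ 0 < eta /\
    forall x j, Xin x -> nu Xin T phi k - eta < phi (iter j T x) ->
      (eps%:E < g (iter j T x))%E.

Definition opt_lyapunov_with (Xin : set X) (T : X -> X) (V : X -> \bar R)
  (lam : R) : Prop :=
  0 < lam < 1 /\ (forall x, (0 <= V x)%E) /\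
  (0 < ereal_sup (V @` Xin) <= 1)%E /\
  (forall x, (V (T x) <= lam%:E * V x)%E).

Definition opt_lyapunov (Xin : set X) (T : X -> X) (V : X -> \bar R) : Prop :=
  exists lam, opt_lyapunov_with Xin T V lam.

Definition Vfun (T : X -> X) (phi : X -> R) (h : R -> R) (beta : R) (x : X)
  : \bar R :=
  ereal_sup [set ((beta ^- k) * hinv01 h (omega h (phi (iter k T x))))%:E
            | k in [set: nat]].

End Defs.

(* Since nu_k <= h (beta^k), each term beta^-k h^-1(omega(phi(T^k x))) of V x
   with x in Xin is at most beta^-k h^-1(h (beta^k)) = 1, and shifting the index
   k -> k+1 gives V (T x) <= beta V x.  Continuity of h at 0 forces
   limsup nu_n <= h 0, so every k with nu_k > h 0 lies in G^>.  The k = 0 term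
   bounds V from below by h^-1(omega(phi)), which dominates hhat (phi); this
   gives the certificate, and also compatibility since h^-1 is increasing. *)

From HB Require Import structures.
From mathcomp Require Import all_boot all_order all_algebra.
From mathcomp Require Import all_classical all_reals all_analysis.
From mathcomp Require Import lra.
Import Order.TTheory GRing.Theory Num.Theory.
Import numFieldNormedType.Exports.
Local Open Scope classical_set_scope.
Local Open Scope ring_scope.

Lemma continuous_comp_within (R : realType) (T : topologicalType)
    (A : set R) (f : R -> R) (g : T -> R) (x : T) :
  {within A, continuous f} -> (forall y, A (g y)) -> {for x, continuous g} ->
  {for x, continuous (f \o g)}.
Proof.
move=> fA gA gx; have fgx := (subspace_continuousP A f).1 fA (g x) (gA x).
apply: (cvg_trans _ fgx) => P /= fP.
apply: (@filterS _ (nbhs x) _ (g @^-1` (fun t => A t -> (f @^-1` P) t)) _ _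
  (gx _ fP)).
by move=> y /= /(_ (gA y)).
Qed.

(* The paper's h^ on ]-oo, h 1], extended by the constant 1 to make it continuous. *)
Definition hhat {R : realType} (h : R -> R) (s : R) : R :=
  Order.min (s - h 0) 0 + hinv01 h (omega h s).

Section InverseOnUnitInterval.
Context {R : realType} {h : R -> R}.
Hypothesis h_incr : {in `[0, 1] &, forall s t, s < t -> h s < h t}.
Hypothesis h_cont : {within `[0, 1], continuous h}.

Let in01 (t : R) : (t \in `[0, 1]) = (0 <= t <= 1).
Proof. by rewrite in_itv. Qed.

Lemma lt_h01 : h 0 < h 1.
Proof. by apply: h_incr; rewrite ?in01 ?lexx ?ler01 ?ltr01. Qed.

Lemma le_h s t : 0 <= s -> t <= 1 -> s <= t -> h s <= h t.
Proof.
move=> s0 t1; rewrite le_eqVlt => /predU1P[->//|st].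
by apply/ltW/h_incr; rewrite // in01 ?s0 ?t1 /= ?andbT; lra.
Qed.

Lemma hinv01P s : h 0 <= s -> s <= h 1 ->
  0 <= hinv01 h s <= 1 /\ h (hinv01 h s) = s.
Proof.
move=> s0 s1; apply: (@xgetPex R 0 [set t | 0 <= t <= 1 /\ h t = s]).
have [c c01 hc] : exists2 c, c \in `[0, 1] & h c = s.
  apply: IVT; [exact: ler01 | exact: h_cont |].
  by rewrite min_l ?max_r ?s0 ?s1 // ltW // lt_h01.
by exists c; split => //; rewrite -in01.
Qed.

Lemma hinv01K t : 0 <= t <= 1 -> hinv01 h (h t) = t.
Proof.
move=> t01; apply: xget_unique => // y [y01 hy].
have [yt|ty|//] := ltgtP y t.
- by have := h_incr y t; rewrite hy ltxx !in01 => /(_ y01 t01 yt).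
- by have := h_incr t y; rewrite hy ltxx !in01 => /(_ t01 y01 ty).
Qed.

Lemma hinv01_h0 : hinv01 h (h 0) = 0.
Proof. by rewrite hinv01K // lexx ler01. Qed.

Lemma hinv01_lt s s' : h 0 <= s -> s < s' -> s' <= h 1 ->
  hinv01 h s < hinv01 h s'.
Proof.
move=> hs ss' s'h.
have [/andP[a0 a1] ha] := hinv01P _ hs (ltW (lt_le_trans ss' s'h)).
have [/andP[b0 b1] hb] := hinv01P _ (le_trans hs (ltW ss')) s'h.
rewrite ltNge; apply/negP => /(le_h _ _ b0 a1).
by rewrite ha hb leNgt ss'.
Qed.

Lemma hinv01_le s s' : h 0 <= s -> s <= s' -> s' <= h 1 ->
  hinv01 h s <= hinv01 h s'.
Proof.
by move=> hs; rewrite le_eqVlt => /predU1P[->//|ss'] s'h; exact/ltW/hinv01_lt.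
Qed.

Lemma hinv01_gt0 s : h 0 < s -> s <= h 1 -> 0 < hinv01 h s.
Proof. by move=> ? ?; rewrite -hinv01_h0 hinv01_lt. Qed.

Lemma hinv01_continuous : {within `[h 0, h 1], continuous (hinv01 h)}.
Proof.
apply: (segment_can_le_continuous ler01 h_cont).
by move=> t; rewrite in01 => /hinv01K.
Qed.

Lemma omega_ge s : h 0 <= omega h s.
Proof. by rewrite /omega le_min le_max lexx orbT ltW // lt_h01. Qed.

Lemma omega_le s : omega h s <= h 1.
Proof. by rewrite /omega ge_min lexx. Qed.

Lemma omega_id s : h 0 <= s -> s <= h 1 -> omega h s = s.
Proof. by move=> ? ?; rewrite /omega max_l // min_r. Qed.

Lemma omega_le_max s : omega h s <= Order.max s (h 0).
Proof. by rewrite /omega ge_min lexx orbT. Qed.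

Lemma hinv01_omega_ge0 s : 0 <= hinv01 h (omega h s).
Proof. by rewrite -hinv01_h0 hinv01_le ?omega_ge ?omega_le. Qed.

Lemma hhat_low s : s <= h 0 -> hhat h s = s - h 0.
Proof.
move=> s0; rewrite /hhat; have -> : omega h s = h 0.
  by rewrite /omega max_r // min_r // ltW // lt_h01.
by rewrite hinv01_h0 addr0 min_l // subr_le0.
Qed.

Lemma hhat_mid s : h 0 <= s -> s <= h 1 -> hhat h s = hinv01 h s.
Proof. by move=> ? ?; rewrite /hhat omega_id // min_r ?add0r // subr_ge0. Qed.

Lemma hhat_le_hinv01_omega s : hhat h s <= hinv01 h (omega h s).
Proof. by rewrite /hhat gerDr ge_min lexx orbT. Qed.

Lemma hhat_lt s t : s < t -> t <= h 1 -> hhat h s < hhat h t.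
Proof.
move=> st t1; have [t0|t0] := leP t (h 0).
  by rewrite !hhat_low ?ltrD2r // (le_trans (ltW st)).
rewrite (hhat_mid _ (ltW t0)) //; have [s0|s0] := leP s (h 0).
  by rewrite hhat_low // (le_lt_trans _ (hinv01_gt0 _ t0 t1)) // subr_le0.
have s1 : s <= h 1 by rewrite ltW // (lt_le_trans st).
by rewrite hhat_mid ?hinv01_lt // ltW.
Qed.

Lemma hhat_image : hhat h @` `[h 0, h 1] = `[0, 1]%classic.
Proof.
apply/seteqP; split=> [_ [s /= /[!in_itv] /= /andP[s0 s1] <-]|t].
  by rewrite hhat_mid //; have [] := hinv01P _ s0 s1.
move=> /= /[!in_itv] /= /andP[t0 t1]; exists (h t).
  by rewrite in_itv /= !le_h.
by rewrite hhat_mid ?le_h ?hinv01K ?t0.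
Qed.

Lemma hhat_continuous : continuous (hhat h).
Proof.
move=> x; apply: (@continuousD _ _ _ (fun s => Order.min (s - h 0) 0)
  (fun s => hinv01 h (omega h s))).
  apply: min_fun_continuous => y; last exact: cvg_cst.
  by apply: continuousB; [exact: cvg_id | exact: cvg_cst].
apply: continuous_comp_within hinv01_continuous _ _.
  by move=> y /=; rewrite in_itv /= omega_ge omega_le.
apply: min_fun_continuous => y; first exact: cvg_cst.
by apply: max_fun_continuous => z; [exact: cvg_id | exact: cvg_cst].
Qed.

End InverseOnUnitInterval.

Lemma cvg_comp_expr (R : realType) (h : R -> R) (beta : R) :
  {within `[0, 1], continuous h} -> 0 <= beta < 1 ->
  h (beta ^+ n) @[n --> \oo] --> h 0.
Proof.
move=> h_cont /andP[b0 b1].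
have := (subspace_continuousP (`[0, 1]%classic : set R) h).1 h_cont 0.
rewrite /= in_itv /= lexx ler01 => /(_ isT) h0.
apply: (cvg_trans _ h0) => P /= P0.
have := @cvg_expr R beta; rewrite ger0_norm // => /(_ b1 _ P0) Pn.
apply: (@filterS _ \oo _ _ _ _ Pn) => n /=; apply.
by rewrite in_itv /= exprn_ge0 // exprn_ile1 // ltW.
Qed.

Section VfunLyapunov.
Context {R : realType} {d : nat} (Xin : set 'rV[R]_d) (T : 'rV[R]_d -> 'rV[R]_d)
  (phi : 'rV[R]_d -> R) (h : R -> R) (beta : R).
Hypothesis nu_fin : forall k, nu_e Xin T phi k \is a fin_num.
Hypothesis h_incr : {in `[0, 1] &, forall s t, s < t -> h s < h t}.
Hypothesis h_cont : {within `[0, 1], continuous h}.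
Hypothesis beta_gt0 : 0 < beta.
Hypothesis beta_lt1 : beta < 1.
Hypothesis nu_le_h : forall k, nu Xin T phi k <= h (beta ^+ k).

Local Notation V := (Vfun T phi h beta).

Let expr_beta01 k : 0 <= beta ^+ k <= 1.
Proof. by rewrite exprn_ge0 ?exprn_ile1 // ltW. Qed.

Lemma phi_le_nu k x : Xin x -> phi (iter k T x) <= nu Xin T phi k.
Proof.
move=> Xx; rewrite -lee_fin /nu fineK ?nu_fin //.
by apply: ereal_sup_ubound; exists x.
Qed.

Lemma exists_phi_gt k s : s < nu Xin T phi k ->
  exists2 x, Xin x & s < phi (iter k T x).
Proof.
rewrite -lte_fin /nu fineK ?nu_fin // => /ereal_sup_gt[_ [x Xx <-]].
by rewrite lte_fin; exists x.
Qed.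

Lemma nu_le_h1 k : nu Xin T phi k <= h 1.
Proof.
have /andP[_ b1] := expr_beta01 k.
by rewrite (le_trans (nu_le_h k)) // le_h // exprn_ge0 // ltW.
Qed.

Lemma phi_le_h1 k x : Xin x -> phi (iter k T x) <= h 1.
Proof. by move=> Xx; rewrite (le_trans (phi_le_nu k _ Xx)) ?nu_le_h1. Qed.

Lemma Vfun_ub k x :
  ((beta ^- k * hinv01 h (omega h (phi (iter k T x))))%:E <= V x)%E.
Proof. by apply: ereal_sup_ubound; exists k. Qed.

Lemma Vfun_ge_hinv01 x : ((hinv01 h (omega h (phi x)))%:E <= V x)%E.
Proof. by have := Vfun_ub 0 x; rewrite expr0 invr1 mul1r. Qed.

Lemma Vfun_ge0 x : (0 <= V x)%E.
Proof.
by apply: le_trans (Vfun_ge_hinv01 x); rewrite lee_fin hinv01_omega_ge0.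
Qed.

Lemma Vfun_contraction x : (V (T x) <= beta%:E * V x)%E.
Proof.
apply: ge_ereal_sup => _ [k _ <-]; rewrite -iterSr.
apply: le_trans (lee_wpmul2l _ (Vfun_ub k.+1 x)); last by rewrite lee_fin ltW.
by rewrite -EFinM lee_fin exprS invfM !mulrA mulfV ?mul1r ?gt_eqF.
Qed.

Lemma Vfun_le1 x : Xin x -> (V x <= 1)%E.
Proof.
move=> Xx; apply: ge_ereal_sup => _ [k _ <-]; rewrite lee_fin.
have /andP[bk0 bk1] := expr_beta01 k.
have hinv_le_bk : hinv01 h (omega h (phi (iter k T x))) <= beta ^+ k.
  rewrite -[leRHS](hinv01K h_incr) ?bk0 //.
  apply: (hinv01_le h_incr h_cont); [exact: omega_ge | | by rewrite le_h].
  apply: le_trans (omega_le_max _) _; rewrite ge_max le_h // andbT.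
  exact: le_trans (phi_le_nu k _ Xx) (nu_le_h k).
have bk_neq0 : beta ^+ k != 0 by rewrite expf_neq0 // gt_eqF.
by rewrite -(mulVf bk_neq0) ler_wpM2l // invr_ge0.
Qed.

Lemma limn_esup_nu_le_h0 :
  (limn_esup (fun n => (nu Xin T phi n)%:E) <= (h 0)%:E)%E.
Proof.
have hb : (h (beta ^+ n))%:E @[n --> \oo] --> (h 0)%:E.
  apply: cvg_EFin; first exact: nearW.
  by apply: cvg_comp_expr; rewrite // (ltW beta_gt0).
rewrite limn_esup_lim -(cvg_lim _ (cvg_esups hb)) //.
apply: lee_lim; [exact: is_cvg_esups | exact: is_cvg_esups |].
apply: nearW => n; apply: ge_ereal_sup => _ [m /= nm <-].
apply: (@le_trans _ _ (h (beta ^+ m))%:E); first by rewrite lee_fin.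
by apply: ereal_sup_ubound; exists m.
Qed.

Lemma Ggt_gt_h0 k : h 0 < nu Xin T phi k -> Ggt Xin T phi k.
Proof.
by move=> hk; apply: le_lt_trans limn_esup_nu_le_h0 _; rewrite lte_fin.
Qed.

Hypothesis nu_gt_h0 : exists k, h 0 < nu Xin T phi k.

Lemma opt_lyapunov_with_Vfun : opt_lyapunov_with Xin T V beta.
Proof.
split; first by rewrite beta_gt0.
split; first exact: Vfun_ge0.
split; last exact: Vfun_contraction.
apply/andP; split; last by apply: ge_ereal_sup => _ [x Xx <-]; exact: Vfun_le1.
have [k hk] := nu_gt_h0; have [x Xx hx] := exists_phi_gt _ _ hk.
apply: (@lt_le_trans _ _ (V x)); last by apply: ereal_sup_ubound; exists x.
apply: lt_le_trans (Vfun_ub k x).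
rewrite lte_fin mulr_gt0 ?invr_gt0 ?exprn_gt0 //.
have px1 := phi_le_h1 k _ Xx.
by rewrite omega_id ?(ltW hx) // (hinv01_gt0 h_incr h_cont).
Qed.

Lemma Iphi_le_h1 : Iphi Xin T phi `<=` [set s | s <= h 1].
Proof.
rewrite /Iphi (proj1 (closure_id _) (@closed_le _ (h 1))).
apply: closureS => s [a [b [_ [[k _ [x Xx <-]] /andP[_ sb]]]]].
exact: le_trans sb (phi_le_h1 k _ Xx).
Qed.

Section Certificate.
Variable hh : R -> R.
Hypothesis hh_hhat : forall s, s <= h 1 -> hh s = hhat h s.

Lemma SC_hhat : SC Xin T phi hh.
Proof.
exists `[h 0, h 1]%classic; split; first exact: interval_is_interval.
have hh_image : hh @` `[h 0, h 1] = `[0, 1]%classic.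
  rewrite -(hhat_image h_incr h_cont); apply: eq_imagel => s.
  by move=> /= /[!in_itv] /= /andP[_ /hh_hhat].
split=> //; set D := convR _.
have Dle s : D s -> s <= h 1.
  move=> [a [b [_ [[/Iphi_le_h1|] + /andP[_ sb]]]]]; last first.
    by rewrite /= in_itv => /andP[_]; exact: le_trans.
  exact: le_trans.
split.
  move=> x y /[!in_setE] Dx Dy xy; rewrite !hh_hhat ?Dle //.
  exact: hhat_lt (Dle y Dy).
apply: (@subspace_eq_continuous _ D _ (from_subspace D (hhat h))).
  by move=> s /[!in_setE] Ds; rewrite /from_subspace hh_hhat ?Dle.
exact/continuous_subspaceT/hhat_continuous.
Qed.

Lemma certificate_Vfun : certificate Xin T phi V hh.
Proof.
split; [exact: SC_hhat | split].
  have [k hk] := nu_gt_h0; exists k; split; first exact: Ggt_gt_h0.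
  by rewrite hh_hhat ?nu_le_h1 // hhat_mid ?hinv01_gt0 ?nu_le_h1 // ltW.
move=> k x Xx; apply: le_trans (Vfun_ge_hinv01 _).
by rewrite lee_fin hh_hhat ?phi_le_h1 // hhat_le_hinv01_omega.
Qed.

End Certificate.

Lemma compatible_Vfun : compatible Xin T phi V.
Proof.
have [k hk] := nu_gt_h0; exists k; split; first exact: Ggt_gt_h0.
pose m := (nu Xin T phi k + h 0) / 2.
have hm : h 0 < m by rewrite /m; lra.
have m1 : m <= h 1 by have := nu_le_h1 k; rewrite /m; lra.
exists (hinv01 h m / 2), ((nu Xin T phi k - h 0) / 2).
split; first by rewrite divr_gt0 ?hinv01_gt0.
split; first by rewrite divr_gt0 // subr_gt0.
move=> x j Xx hx; have mx : m < phi (iter j T x) by move: hx; rewrite /m; lra.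
apply: lt_le_trans (Vfun_ge_hinv01 _); rewrite lte_fin.
have hm0 := hinv01_gt0 h_incr h_cont _ hm m1.
apply: (@lt_le_trans _ _ (hinv01 h m)); first lra.
have px1 := phi_le_h1 j _ Xx.
rewrite omega_id ?(le_trans (ltW hm) (ltW mx)) //.
exact: (hinv01_le h_incr h_cont) (ltW hm) (ltW mx) px1.
Qed.

End VfunLyapunov.

Theorem mainTheorem19 (R : realType) (d : nat) (Xin : set 'rV[R]_d)
  (T : 'rV[R]_d -> 'rV[R]_d) (phi : 'rV[R]_d -> R) (h : R -> R) (beta : R) :
  Xin !=set0 ->
  phi 0 = 0 ->
  (forall k, nu_e Xin T phi k \is a fin_num) ->
  {in `[0, 1] &, forall s t, s < t -> h s < h t} ->
  {within `[0, 1], continuous h} ->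
  0 < beta < 1 ->
  (forall k, nu Xin T phi k <= h (beta ^+ k)) ->
  (exists k, h 0 < nu Xin T phi k) ->
  let V := Vfun T phi h beta in
  [/\ opt_lyapunov Xin T V,
      (forall x, (V (T x) <= beta%:E * V x)%E),
      (forall hh : R -> R,
         (forall s, s <= h 0 -> hh s = s - h 0) ->
         (forall s, h 0 < s <= h 1 -> hh s = hinv01 h s) ->
         certificate Xin T phi V hh)
    & compatible Xin T phi V].
Proof.
move=> _ _ nu_fin h_incr h_cont /andP[b0 b1] nu_le_h nu_gt_h0 V.
split.
- by exists beta; exact: opt_lyapunov_with_Vfun.
- exact: Vfun_contraction.
- move=> hh hh_low hh_mid; apply: certificate_Vfun => // s s1.
  have [s0|s0] := leP s (h 0); first by rewrite hh_low ?hhat_low.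
  by rewrite hh_mid ?s0 ?hhat_mid // ltW.
- exact: compatible_Vfun.
Qed.
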